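(* Consider the setting described in the context and assume $D>2$. For $t\ge 1$ define $\mathcal{I}_0(t)=\bigcup_{m=0}^{t-1}\mathcal{F}_0(m)$, $\mathcal{I}_1(t)=\Big(\bigcup_{m=0}^{t-1}\mathcal{F}_{D-1}(m)\Big)\setminus \mathcal{I}_0(t)$ and $\mathcal{I}_2(t)=V\setminus(\mathcal{I}_0(t)\cup\mathcal{I}_1(t))$. Then for every $t\ge1$, $$\sum_{i\in\mathcal{I}_0(t)}\ \sum_{j\in C_i(t)\cap\mathcal{I}_2(t)} a_j(t-1)\le N.$$
   Context: $G=(V,E)$ is a finite connected undirected graph with node set $V=\{0,\dots,N-1\}$; $\mathcal{N}(i)$ denotes the set of neighbours of $i$. Every edge has length $1$, $d_{ij}$ is the hop distance between $i$ and $j$, and $\mathcal{F}_k(m)=\{i\in V : d_{ik}=m\}$. Every node carries value $v_i=1$. The source set is $S(t)=\{D-1\}$ for $t\le 0$ and $S(t)=\{0\}$ for $t\ge 1$. The integer $D$ satisfies $\max_{i\in V}d_{i0}=D-1$, and nodes are labelled so that $0,1,\dots,D-1$ is a path in which node $i$ is a neighbour of $i+1$ with $d_{0,i}=i$ for $0\le i\le D-1$. The algorithm updates, for $t\ge1$: $\hat d_i(t)=0$ if $i\in S(t)$, and $\hat d_i(t)=\min_{j\in\mathcal{N}(i)}\{\hat d_j(t-1)+1\}$ otherwise; $c_i(t)=i$ if $i\in S(t)$, and otherwise $c_i(t)$ is a minimizer $j\in\mathcal{N}(i)$ of $\hat d_j(t-1)+1$; $C_i(t)=\{j : c_j(t-1)=i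 \text{ and } \hat d_j(t-1)=\hat d_i(t)+1\}$; $a_i(t)=\sum_{j\in C_i(t)}a_j(t-1)+v_i$. Initial values $(\hat d_i(0),c_i(0),a_i(0))$ are steady-state values of these recursions when the source set is constantly $\{D-1\}$; in particular $\hat d_i(0)=m$ for all $i\in\mathcal{F}_{D-1}(m)$, and for every integer $m$, $\sum_{i\in\mathcal{F}_{D-1}(m)}a_i(0)\le N$. *)

From mathcomp Require Import all_boot.
Set Implicit Arguments. Unset Strict Implicit. Unset Printing Implicit Defensive.

Fixpoint nball (T : finType) (e : rel T) (i : T) (n : nat) : {set T} :=
  match n with
  | 0 => [set i]
  | n'.+1 => nball e i n' :|: [set y | [exists x in nball e i n', e x y]]
  end.

(* hop distance: least n with j in the n-ball of i (searched over n < #|T|,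
   which suffices in a connected graph; every edge has length 1) *)
Definition hopdist (T : finType) (e : rel T) (i j : T) : nat :=
  find (fun n => j \in nball e i n) (iota 0 #|T|).

Definition level (T : finType) (e : rel T) (k : T) (m : nat) : {set T} :=
  [set i | hopdist e i k == m].

Definition childset (N : nat) (cprev : 'I_N -> 'I_N) (dprev : 'I_N -> nat)
  (dnow_i : nat) (i : 'I_N) : {set 'I_N} :=
  [set j | (cprev j == i) && (dprev j == dnow_i + 1)].

From mathcomp Require Import all_boot zify.

(* Until time min(d(k,0), d(k,D-1)) the new source is invisible to node k, so
   dhat_k still equals d(k,D-1); from time d(k,0) on, dhat_k <= d(k,0).  Hence a
   child j in I_2(t) of a node i in I_0(t) lies at distance exactly t from D-1,
   and, by induction on time, a_j(t-1) is at most the number of descendants of j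
   in the forest of parent pointers c(t-2), c(t-3), ..., c(0).  Descendant sets
   of distinct nodes at the same distance from D-1 are disjoint, and j determines
   i = c_j(t-1), so the double sum counts distinct nodes. *)

Set Implicit Arguments.
Unset Strict Implicit.
Unset Printing Implicit Defensive.

Lemma leq_sum_disjoint (I T : finType) (P : {pred I}) (B : I -> {pred T})
    (A : {pred T}) (F : T -> nat) :
  (forall i, i \in P -> {subset B i <= A}) ->
  (forall i1 i2 x, i1 \in P -> i2 \in P -> x \in B i1 -> x \in B i2 -> i1 = i2) ->
  \sum_(i in P) \sum_(x in B i) F x <= \sum_(x in A) F x.
Proof.
move=> sBA injB; rewrite (exchange_big_dep (mem A)) /=; last first.
  by move=> i x iP /(sBA i iP).
apply: leq_sum => x _; rewrite sum_nat_const -[leqRHS]mul1n leq_mul2r.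
apply/orP; right; apply/card_le1_eqP => i1 i2.
by move=> /andP[i1P xB1] /andP[i2P xB2]; exact: injB xB2 xB1.
Qed.

Section HopDistance.
Variables (T : finType) (e : rel T).

Lemma nball_self x n : x \in nball e x n.
Proof. by elim: n => [|n IH] /=; rewrite ?set11 // in_setU IH. Qed.

Lemma nballS x x' y n : e x x' -> y \in nball e x' n -> y \in nball e x n.+1.
Proof.
move=> exx'; elim: n y => [|n IH] y /=.
  rewrite in_set1 => /eqP ->; rewrite in_setU; apply/orP; right.
  by rewrite inE; apply/existsP; exists x; rewrite set11.
rewrite in_setU => /orP[/IH yB|]; first by rewrite in_setU yB.
rewrite inE => /existsP[w /andP[wB ewy]].
rewrite in_setU; apply/orP; right; rewrite inE; apply/existsP; exists w.
by rewrite (IH _ wB).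
Qed.

Lemma nballSP x y n : y \in nball e x n.+1 ->
  y = x \/ exists2 x', e x x' & y \in nball e x' n.
Proof.
elim: n y => [|n IH] y /=.
  rewrite in_setU in_set1 => /orP[/eqP ->|]; first by left.
  rewrite inE => /existsP[w /andP[]]; rewrite in_set1 => /eqP -> exy.
  by right; exists y; rewrite ?set11.
rewrite in_setU => /orP[/IH[->|[x' exx' yB]]|]; first by left.
  by right; exists x'; rewrite // in_setU yB.
rewrite inE => /existsP[w /andP[/IH[->|[x' exx' wB]] ewy]].
  by right; exists y; rewrite // in_setU nball_self.
right; exists x'; rewrite // in_setU; apply/orP; right.
by rewrite inE; apply/existsP; exists w; rewrite wB.
Qed.

Lemma path_nball x p : path e x p -> last x p \in nball e x (size p).
Proof.
elim: p x => [|x' p IH] x /=; first by rewrite set11.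
by case/andP=> exx' /IH; apply: nballS.
Qed.

Lemma hopdist_le x y n : y \in nball e x n -> hopdist e x y <= n.
Proof.
move=> yB; rewrite /hopdist; case: (ltnP n #|T|) => [ltnT|geTn].
  rewrite leqNgt; apply/negP => /(before_find 0).
  by rewrite nth_iota // add0n yB.
by apply: leq_trans (find_size _ _) _; rewrite size_iota.
Qed.

Lemma hopdist_refl x : hopdist e x x = 0.
Proof. by apply/eqP; rewrite -leqn0 hopdist_le ?nball_self. Qed.

Hypothesis e_connected : forall x y, connect e x y.

Lemma hopdist_lt_card x y : hopdist e x y < #|T|.
Proof.
case/connectP: (e_connected x y) => p + ->; case/shortenP=> p' ep' uniq_p' _.
apply: leq_ltn_trans (hopdist_le (path_nball ep')) _.
by have := max_card (mem (x :: p')); rewrite (card_uniqP uniq_p').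
Qed.

Lemma nball_hopdist x y : y \in nball e x (hopdist e x y).
Proof.
have has_n : has (fun n => y \in nball e x n) (iota 0 #|T|).
  by rewrite has_find size_iota hopdist_lt_card.
by have := nth_find 0 has_n; rewrite nth_iota ?add0n ?hopdist_lt_card.
Qed.

Lemma hopdist_eq0 x y : hopdist e x y = 0 -> y = x.
Proof. by move=> d0; have := nball_hopdist x y; rewrite d0 in_set1 => /eqP. Qed.

Lemma hopdist_edge x x' y : e x x' -> hopdist e x y <= (hopdist e x' y).+1.
Proof. by move=> exx'; apply/hopdist_le/(nballS exx')/nball_hopdist. Qed.

Lemma hopdist_succP x y n : hopdist e x y = n.+1 ->
  exists2 x', e x x' & hopdist e x' y = n.
Proof.
move=> dxy; have := nball_hopdist x y; rewrite dxy => /nballSP[yx|[x' exx' yB]].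
  by rewrite yx hopdist_refl in dxy.
exists x' => //; have := hopdist_le yB; have := hopdist_edge y exx'; lia.
Qed.

End HopDistance.

Section Descendants.
Variables (T : finType) (h : T -> nat) (c : nat -> T -> T).

(* [ancestor s L x] follows the pointers c (s-L), ..., c (s-1) from x; by the
   truncation of [s.-1], pointers of times below 0 are those of time 0. *)
Fixpoint ancestor (s L : nat) (x : T) : T :=
  if L is L'.+1 then c s.-1 (ancestor s.-1 L' x) else x.

Definition descendants (s : nat) (j : T) : {set T} :=
  [set x | (h j <= h x) && (ancestor s (h x - h j) x == j)].

Lemma descendants_self s j : j \in descendants s j.
Proof. by rewrite inE leqnn subnn eqxx. Qed.

Lemma descendants_inj s j1 j2 x : h j1 = h j2 ->
  x \in descendants s j1 -> x \in descendants s j2 -> j1 = j2.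
Proof. by rewrite !inE => <- /andP[_ /eqP->] /andP[_ /eqP->]. Qed.

Lemma card_descendants_children s j (Ch : {pred T}) :
    (forall k, k \in Ch -> c s.-1 k = j /\ h k = (h j).+1) ->
  \sum_(k in Ch) #|descendants s.-1 k| < #|descendants s j|.
Proof.
move=> chP; rewrite (cardsD1 j) descendants_self add1n ltnS.
under eq_bigr do rewrite -sum1_card.
rewrite -sum1_card; apply: leq_sum_disjoint => [k kCh x|k1 k2 x k1Ch k2Ch].
  have [ckj hk] := chP k kCh; rewrite !inE hk => /andP[hkx /eqP ancx].
  have -> : h x - h j = (h x - (h j).+1).+1 by lia.
  rewrite /= ancx ckj eqxx andbT ltnW // andbT.
  by apply: contraTneq hkx => ->; rewrite ltnn.
by apply: descendants_inj; rewrite (chP k1 k1Ch).2 (chP k2 k2Ch).2.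
Qed.

End Descendants.

Section Dynamics.
Variables (N : nat) (adj : rel 'I_N) (o z : 'I_N).
Variables (dhat : nat -> 'I_N -> nat) (c : nat -> 'I_N -> 'I_N) (a : nat -> 'I_N -> nat).

Hypothesis Hsym : symmetric adj.
Hypothesis Hconn : forall i j, connect adj i j.
Hypothesis H0c : forall i, (i = z -> c 0 i = i) /\
  (i <> z -> adj i (c 0 i) /\ dhat 0 (c 0 i) + 1 = dhat 0 i).
Hypothesis H0a : forall i,
  a 0 i = \sum_(j in childset (c 0) (dhat 0) (dhat 0 i) i) a 0 j + 1.
Hypothesis H0lev : forall m i, i \in level adj z m -> dhat 0 i = m.
Hypothesis Hd : forall t i, 1 <= t ->
  (i = o -> dhat t i = 0) /\
  (i <> o -> (exists j, adj i j /\ dhat t i = dhat t.-1 j + 1) /\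
             (forall j, adj i j -> dhat t i <= dhat t.-1 j + 1)).
Hypothesis Hc : forall t i, 1 <= t ->
  (i = o -> c t i = i) /\
  (i <> o -> adj i (c t i) /\ dhat t.-1 (c t i) + 1 = dhat t i).
Hypothesis Ha : forall t i, 1 <= t ->
  a t i = \sum_(j in childset (c t.-1) (dhat t.-1) (dhat t i) i) a t.-1 j + 1.

Local Notation dist := (hopdist adj).
Local Notation desc := (descendants (dist^~ z) c).

Lemma dhat0E k : dhat 0 k = dist k z.
Proof. by apply: (H0lev (m := dist k z)); rewrite inE. Qed.

Lemma dhat_stale r k : r < dist k o -> r < dist k z -> dhat r k = dist k z.
Proof.
elim: r k => [|r IH] k ltko ltkz; first exact: dhat0E.
have ko : k <> o by move=> ko; rewrite ko hopdist_refl in ltko.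
have [[j [kj dhat_kj]] dhat_min] := (@Hd r.+1 k isT).2 ko.
have [k' kk' distk'] : exists2 k', adj k k' & dist k' z = (dist k z).-1.
  by apply: (hopdist_succP Hconn); rewrite prednK //; apply: leq_ltn_trans ltkz.
have distj_o := hopdist_edge Hconn o kj; have distj_z := hopdist_edge Hconn z kj.
have distk'_o := hopdist_edge Hconn o kk'.
by have := dhat_min k' kk'; rewrite dhat_kj /= !IH; lia.
Qed.

Lemma dhat_fresh r k : 0 < r -> dist k o < r -> dhat r k <= dist k o.
Proof.
elim: r k => // r IH k _ ltkr.
have [->|/eqP ko] := eqVneq k o; first by rewrite ((@Hd r.+1 o isT).1 erefl).
case distk: (dist k o) ltkr => [|n] ltkr.
  by move: ko; rewrite (hopdist_eq0 Hconn distk).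
have [k' kk' distk'] := hopdist_succP Hconn distk.
have [_ dhat_min] := (@Hd r.+1 k isT).2 ko.
by have := dhat_min k' kk'; have := IH k'; rewrite /= distk'; lia.
Qed.

Lemma parent_adj r k : c r k != k -> adj k (c r k).
Proof.
case: r => [|r] ck.
  have [kz|/eqP kz] := eqVneq k z; last by case: ((H0c k).2 kz).
  by rewrite kz (H0c z).1 ?eqxx in ck.
have [ko|/eqP ko] := eqVneq k o; last by case: ((@Hc r.+1 k isT).2 ko).
by rewrite ko (@Hc r.+1 o isT).1 ?eqxx in ck.
Qed.

Lemma a0_le_card_desc j : a 0 j <= #|desc 0 j|.
Proof.
have [n] := ubnP (N - dist j z); elim: n j => // n IH j ltjn.
rewrite H0a addn1; apply: leq_ltn_trans (card_descendants_children _) => /=.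
  apply: leq_sum => k; rewrite inE => /andP[_ /eqP]; rewrite !dhat0E => distk.
  by apply: IH; have := hopdist_lt_card Hconn k z; rewrite card_ord; lia.
by move=> k; rewrite inE => /andP[/eqP -> /eqP]; rewrite !dhat0E addn1.
Qed.

Lemma a_le_card_desc s j : s < dist j o -> s < dist j z -> a s j <= #|desc s j|.
Proof.
elim: s j => [|r IH] j ltjo ltjz; first exact: a0_le_card_desc.
have childP k : k \in childset (c r) (dhat r) (dhat r.+1 j) j ->
    [/\ c r k = j, r < dist k o, r < dist k z & dist k z = (dist j z).+1].
  rewrite inE (dhat_stale ltjo ltjz) => /andP[/eqP ckj /eqP dhatk].
  have ck_neq : c r k != k.
    apply/eqP => ckk; move: dhatk; rewrite -ckk ckj.
    by rewrite (dhat_stale (ltnW ltjo) (ltnW ltjz)) addn1 => /n_Sn.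
  have jk : adj j k by rewrite Hsym -ckj parent_adj.
  have disto := hopdist_edge Hconn o jk; have distz := hopdist_edge Hconn z jk.
  have ltko : r < dist k o by lia.
  have ltkz : r < dist k z by lia.
  by split => //; rewrite -(dhat_stale ltko ltkz) dhatk addn1.
rewrite Ha // addn1; apply: leq_ltn_trans (card_descendants_children _) => /=.
  by apply: leq_sum => k /childP[_ ltko ltkz _]; apply: IH.
by move=> k /childP[-> _ _ ->].
Qed.

Lemma child_of_fresh_level t i j : 0 < t -> dist i o < t ->
    j \in childset (c t.-1) (dhat t.-1) (dhat t i) i ->
  t <= dist j o -> t <= dist j z -> dist j z = t.
Proof.
move=> t_gt0 ltit + lejo lejz; rewrite inE => /andP[_ /eqP].
by rewrite dhat_stale; have := dhat_fresh t_gt0 ltit; lia.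
Qed.

End Dynamics.

Theorem lemma4 (N D : nat) (adj : rel 'I_N)
  (o z : 'I_N)                                   (* nodes labelled 0 and D-1 *)
  (dhat : nat -> 'I_N -> nat) (c : nat -> 'I_N -> 'I_N) (a : nat -> 'I_N -> nat)
  (* simple undirected connected graph *)
  (Hsym : symmetric adj) (Hirr : irreflexive adj)
  (Hconn : forall i j, connect adj i j)
  (* labelling, D *)
  (Ho : val o = 0) (Hz : val z = D.-1) (HDN : D <= N) (HD : 2 < D)
  (Hmax : \max_(i : 'I_N) hopdist adj i o = D.-1)
  (Hpath : forall i j : 'I_N, val j = (val i).+1 -> val j < D -> adj i j)
  (Hpathd : forall i : 'I_N, val i < D -> hopdist adj o i = val i)
  (* initial values: steady state with source set {D-1} *)
  (H0d : forall i, (i = z -> dhat 0 i = 0) /\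
     (i <> z -> (exists j, adj i j /\ dhat 0 i = dhat 0 j + 1) /\
                (forall j, adj i j -> dhat 0 i <= dhat 0 j + 1)))
  (H0c : forall i, (i = z -> c 0 i = i) /\
     (i <> z -> adj i (c 0 i) /\ dhat 0 (c 0 i) + 1 = dhat 0 i))
  (H0a : forall i, a 0 i = \sum_(j in childset (c 0) (dhat 0) (dhat 0 i) i) a 0 j + 1)
  (H0lev : forall m i, i \in level adj z m -> dhat 0 i = m)
  (H0sum : forall m, \sum_(i in level adj z m) a 0 i <= N)
  (* updates for t >= 1, source set {0} *)
  (Hd : forall t i, 1 <= t ->
     (i = o -> dhat t i = 0) /\
     (i <> o -> (exists j, adj i j /\ dhat t i = dhat t.-1 j + 1) /\
                (forall j, adj i j -> dhat t i <= dhat t.-1 j + 1)))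
  (Hc : forall t i, 1 <= t ->
     (i = o -> c t i = i) /\
     (i <> o -> adj i (c t i) /\ dhat t.-1 (c t i) + 1 = dhat t i))
  (Ha : forall t i, 1 <= t ->
     a t i = \sum_(j in childset (c t.-1) (dhat t.-1) (dhat t i) i) a t.-1 j + 1)
  : forall t, 1 <= t ->
    let I0 := [set i | hopdist adj i o < t] in
    let I1 := [set i | hopdist adj i z < t] :\: I0 in
    let I2 := ~: (I0 :|: I1) in
    \sum_(i in I0)
      \sum_(j in childset (c t.-1) (dhat t.-1) (dhat t i) i :&: I2) a t.-1 j <= N.
Proof.
move=> t t_gt0; rewrite [is_true _]/=.
set I0 := [set i | _ < t]; set I1 := _ :\: I0; set I2 := ~: _.
pose desc := descendants (fun k => hopdist adj k z) c.
pose B i := childset (c t.-1) (dhat t.-1) (dhat t i) i :&: I2.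
have childP i j : i \in I0 -> j \in B i ->
    [/\ c t.-1 j = i, t.-1 < hopdist adj j o, t.-1 < hopdist adj j z
      & hopdist adj j z = t].
  move=> iI0 /setIP[jC jI2]; have ltit : hopdist adj i o < t by rewrite inE in iI0.
  have [lejo lejz] : t <= hopdist adj j o /\ t <= hopdist adj j z.
    by move: jI2; rewrite !inE; lia.
  have := child_of_fresh_level Hconn H0lev Hd t_gt0 ltit jC lejo lejz.
  by move: jC; rewrite inE => /andP[/eqP-> _]; split => //; lia.
apply: (@leq_trans (\sum_(i in I0) \sum_(j in B i) #|desc t.-1 j|)).
  apply: leq_sum => i iI0; apply: leq_sum => j /(childP i j iI0)[_ ltjo ltjz _].
  exact: (a_le_card_desc Hsym Hconn H0c H0a H0lev Hd Hc Ha).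
apply: (@leq_trans (\sum_(j | hopdist adj j z == t) #|desc t.-1 j|)).
  apply: leq_sum_disjoint => [i iI0 j /(childP i j iI0)[_ _ _ dist_j]|].
    exact/eqP.
  move=> i1 i2 j i1I0 i2I0.
  by move=> /(childP _ _ i1I0)[<- _ _ _] /(childP _ _ i2I0)[<- _ _ _].
apply: (@leq_trans #|'I_N|); last by rewrite card_ord.
rewrite -sum1_card; under eq_bigr do rewrite -sum1_card.
apply: leq_sum_disjoint => // j1 j2 x /eqP-dist_j1 /eqP-dist_j2.
by apply: descendants_inj; rewrite dist_j1 dist_j2.
Qed.
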